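(* Let $V$ be a nonlocal vertex algebra and let $F=\{F_n\}_{n\in\mathbb{Z}}$ be an increasing filtration of $V$ with $\mathbf{1}\in F_0$ such that $a_mF_n\subset F_{k+n-m-1}$ for all $a\in F_k$ and $k,m,n\in\mathbb{Z}$. Then the graded space $\mathrm{Gr}_F(V)=\coprod_{n\in\mathbb{Z}}F_n/F_{n-1}$ is a $\mathbb{Z}$-graded nonlocal vertex algebra with vacuum vector $\mathbf{1}+F_{-1}$ and with $(a+F_{m-1})_k(b+F_{n-1})=a_kb+F_{m+n-k-2}$ for $a\in F_m$, $b\in F_n$, $m,n,k\in\mathbb{Z}$. Furthermore, if $F$ is the filtration associated with a generating subset $T$ of $V$, then $\{u+F_0\mid u\in T\}\subset F_1/F_0$ is a generating subset of $\mathrm{Gr}_F(V)$.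
   Context: A nonlocal vertex algebra is a complex vector space $V$ with vector $\mathbf{1}$ and linear $Y:V\to\mathrm{Hom}(V,V((x)))$, $Y(v,x)=\sum_nv_nx^{-n-1}$, such that $Y(\mathbf{1},x)v=v$, $Y(v,x)\mathbf{1}\in V[[x]]$ with constant term $v$, and for $u,v,w$ there is $l\ge0$ with $(x_0+x_2)^lY(u,x_0+x_2)Y(v,x_2)w=(x_0+x_2)^lY(Y(u,x_0)v,x_2)w$. A generating subset $T$ is one such that the smallest nonlocal vertex subalgebra containing $T$ is $V$. A $\mathbb{Z}$-graded nonlocal vertex algebra is a nonlocal vertex algebra $U=\coprod_nU_{(n)}$ with $\mathbf{1}\in U_{(0)}$ and $u_kv\in U_{(m+n-k-1)}$ for $u\in U_{(m)},v\in U_{(n)}$. An increasing filtration is a family of subspaces with $F_n\subset F_{n+1}$. The filtration associated with a generating subset $T$: $F_n$ is the span of $u^{(1)}_{m_1}\cdots u^{(r)}_{m_r}\mathbf{1}$ with $u^{(i)}\in T$, $m_i\in\mathbb{Z}$, $m_1+\cdots+m_r\ge-n$, where $r\ge1$ if $n<0$ and $r\ge0$ if $n\ge0$ (this filtration satisfies the hypotheses above). *)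

(* Nonlocal vertex algebras over an arbitrary field K
   (the paper works over C). *)
From HB Require Import structures.
From mathcomp Require Import all_boot all_order all_algebra.
Set Implicit Arguments. Unset Strict Implicit. Unset Printing Implicit Defensive.
Import Order.TTheory GRing.Theory Num.Theory.
Local Open Scope ring_scope.

(* Generalized binomial coefficient  binom(z, j)  for z : int, j : nat:
   binom(n, j) = 'C(n, j) and binom(-(n+1), j) = (-1)^j 'C(n+j, j). *)
Definition binz (z : int) (j : nat) : int :=
  match z with
  | Posz n => ('C(n, j))%:Z
  | Negz n => (-1) ^+ j * ('C(n + j, j))%:Z
  end.

Definition subspace (K : fieldType) (V : lmodType K) (S : V -> Prop) : Prop :=
  S 0 /\ forall (a : K) (x y : V), S x -> S y -> S (a *: x + y).

Definition span (K : fieldType) (V : lmodType K) (P : V -> Prop) (x : V) : Prop :=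
  forall S : V -> Prop, subspace S -> (forall y, P y -> S y) -> S x.

(* Weak associativity, coefficientwise.  md u n v is u_n v, i.e.
   Y(u,x) v = sum_n (md u n v) x^(-n-1).  The identity
   (x0+x2)^l Y(u,x0+x2)Y(v,x2)w = (x0+x2)^l Y(Y(u,x0)v,x2)w
   is compared at the coefficient of x0^a x2^b.  On the left,
   (x0+x2)^l Y(u,x0+x2) = sum_n u_n (x0+x2)^(l-n-1) (expanded in nonnegative
   powers of x2); writing n = l-1-a-t, the coefficient is the sum over t >= 0
   of binom(a+t,t) u_(l-1-a-t) v_(t-1-b) w, which is a finite sum because
   v_m w = 0 for m large: it is computed up to any T beyond which
   v_(t-1-b) w vanishes. *)
Definition weak_assoc (K : fieldType) (V : lmodType K)
    (md : V -> int -> V -> V) : Prop :=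
  forall u v w : V, exists l : nat, forall (a b : int) (T : nat),
    (forall t : nat, (T <= t)%N -> md v (t%:Z - 1 - b) w = 0) ->
    \sum_(0 <= t < T)
        (md u (l%:Z - 1 - a - t%:Z) (md v (t%:Z - 1 - b) w) *~ binz (a + t%:Z) t)
    = \sum_(0 <= i < l.+1)
        (md (md u (l%:Z - i%:Z - 1 - a) v) (i%:Z - 1 - b) w *+ 'C(l, i)).

Record is_nva (K : fieldType) (V : lmodType K) (vac : V)
    (md : V -> int -> V -> V) : Prop := {
  nva_linl : forall (c : K) (u u' : V) (n : int) (v : V),
      md (c *: u + u') n v = c *: md u n v + md u' n v;
  nva_linr : forall (c : K) (u : V) (n : int) (v v' : V),
      md u n (c *: v + v') = c *: md u n v + md u n v';
  nva_trunc : forall u v : V, exists N : int, forall n : int, N <= n -> md u n v = 0;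
  nva_vac : forall (v : V) (n : int), md vac n v = (if n == -1 then v else 0);
  nva_create : forall v : V, (forall n : int, 0 <= n -> md v n vac = 0) /\ md v (-1) vac = v;
  nva_assoc : weak_assoc md }.

Definition direct_sum_decomp (K : fieldType) (U : lmodType K)
    (G : int -> U -> Prop) : Prop :=
  [/\ (forall n, subspace (G n)),
      (forall u : U, exists (s : seq int) (f : int -> U),
          (forall n, G n (f n)) /\ u = \sum_(n <- s) f n) &
      (forall (s : seq int) (f : int -> U), uniq s -> (forall n, G n (f n)) ->
          \sum_(n <- s) f n = 0 -> forall n, n \in s -> f n = 0)].

Definition is_Zgraded_nva (K : fieldType) (U : lmodType K) (G : int -> U -> Prop)
    (vac : U) (md : U -> int -> U -> U) : Prop :=
  [/\ is_nva vac md, direct_sum_decomp G, G 0 vac &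
      forall (m n k : int) (u v : U), G m u -> G n v -> G (m + n - k - 1) (md u k v)].

Definition nva_filtration (K : fieldType) (V : lmodType K) (vac : V)
    (md : V -> int -> V -> V) (F : int -> V -> Prop) : Prop :=
  [/\ (forall n, subspace (F n)),
      (forall n x, F n x -> F (n + 1) x),
      F 0 vac &
      forall (k m n : int) (a b : V), F k a -> F n b -> F (k + n - m - 1) (md a m b)].

(* (U, G, pi) realizes Gr_F(V) = coprod_n F_n / F_(n-1):  G n is identified
   with F_n/F_(n-1) via pi n (linear on F_n, onto G n, kernel F_(n-1)), and
   U is the direct sum of the G n.  pi n x is the class x + F_(n-1). *)
Definition is_Gr_realization (K : fieldType) (V U : lmodType K)
    (F : int -> V -> Prop) (G : int -> U -> Prop) (pi : int -> V -> U) : Prop :=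
  [/\ direct_sum_decomp G,
      (forall n (c : K) x y, F n x -> F n y -> pi n (c *: x + y) = c *: pi n x + pi n y),
      (forall n x, F n x -> G n (pi n x)),
      (forall n y, G n y -> exists2 x, F n x & pi n x = y) &
      (forall n x, F n x -> (pi n x = 0 <-> F (n - 1) x))].

Definition subalgebra (K : fieldType) (V : lmodType K) (vac : V)
    (md : V -> int -> V -> V) (S : V -> Prop) : Prop :=
  [/\ subspace S, S vac & forall (u v : V) (n : int), S u -> S v -> S (md u n v)].

Definition generating (K : fieldType) (V : lmodType K) (vac : V)
    (md : V -> int -> V -> V) (T : V -> Prop) : Prop :=
  forall S, subalgebra vac md S -> (forall x, T x -> S x) -> forall x, S x.

Definition monomial (K : fieldType) (V : lmodType K) (vac : V)
    (md : V -> int -> V -> V) (s : seq (V * int)) : V :=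
  foldr (fun p acc => md p.1 p.2 acc) vac s.

Definition assoc_filtration (K : fieldType) (V : lmodType K) (vac : V)
    (md : V -> int -> V -> V) (T : V -> Prop) (n : int) : V -> Prop :=
  span (fun x => exists s : seq (V * int),
          [/\ (forall i : nat, (i < size s)%N -> T (nth (0, 0) s i).1),
              - n <= \sum_(p <- s) p.2,
              (n < 0 -> (0 < size s)%N) &
              x = monomial vac md s]).

From HB Require Import structures.
From mathcomp Require Import all_boot all_order all_algebra.
From mathcomp Require Import zify.
From Stdlib Require Import ClassicalEpsilon.
Import Order.TTheory GRing.Theory Num.Theory.
Local Open Scope ring_scope.
Set Implicit Arguments. Unset Strict Implicit. Unset Printing Implicit Defensive.

(* The modes of Gr_F(V) are defined on classes by
   (a + F_(m-1))_k (b + F_(n-1)) := a_k b + F_(m+n-k-2): changing a or b by an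
   element of lower filtration degree changes a_k b by an element of F_(m+n-k-2),
   and the operation is extended bilinearly to the direct sum of the F_n/F_(n-1).
   Every axiom of a nonlocal vertex algebra is additive in each of its arguments,
   so it suffices to check it on homogeneous classes, where both sides are the
   classes, in a single quotient F_D/F_(D-1), of the corresponding sides in V.
   Weak associativity is checked coefficientwise; since the identity for the
   exponent l implies it for l + 1, a common exponent exists for sums.
   For the filtration associated with T, each u in T lies in F_1, the class of a
   monomial of degree d in F_d/F_(d-1) is the corresponding monomial in the
   classes u + F_0, and F_n is spanned by monomials of degree at most n, those of
   degree less than n having zero class in F_n/F_(n-1). *)

Lemma binz0 (z : int) : binz z 0 = 1.
Proof. by case: z => n /=; rewrite ?addn0 bin0 ?expr0 ?mul1r. Qed.

Lemma binzS (z : int) (j : nat) : binz z j.+1 = binz (z - 1) j.+1 + binz (z - 1) j.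
Proof.
case: z => [[|n]|n].
- have -> : Posz 0 - 1 = Negz 0 by [].
  by rewrite /= bin0n add0n !binn exprS mulN1r !mulr1 addNr.
- have -> : Posz n.+1 - 1 = Posz n by lia.
  by rewrite /= binS PoszD.
- have -> : Negz n - 1 = Negz n.+1 by rewrite !NegzE; lia.
  rewrite /= (addSn n j.+1) binS addSnnS PoszD mulrDr exprS mulN1r !mulNr.
  by rewrite -addrA addNr addr0.
Qed.

Lemma sumr_supp_sub (T : eqType) (M : zmodType) (s t : seq T) (g : T -> M) :
  uniq s -> uniq t -> {subset s <= t} -> (forall n, n \notin s -> g n = 0) ->
  \sum_(n <- t) g n = \sum_(n <- s) g n.
Proof.
move=> us ut st g0.
rewrite (bigID (mem s)) /= [X in _ + X]big1 ?addr0; last by move=> n /g0.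
rewrite -big_filter; apply: perm_big; apply: uniq_perm; rewrite ?filter_uniq //.
by move=> x; rewrite mem_filter andb_idr //; exact: st.
Qed.

Lemma sumr_supp1 (T : eqType) (M : zmodType) (t : seq T) (m : T) (g : T -> M) :
  uniq t -> m \in t -> (forall n, n != m -> g n = 0) -> \sum_(n <- t) g n = g m.
Proof.
move=> ut mt g0; rewrite (@sumr_supp_sub _ _ [:: m]) ?big_seq1 //.
- by move=> x; rewrite inE => /eqP ->.
- by move=> n; rewrite inE; exact: g0.
Qed.

Section Subspace.
Variables (K : fieldType) (V : lmodType K) (S : V -> Prop).
Hypothesis HS : subspace S.

Lemma subspace0 : S 0. Proof. by case: HS. Qed.

Lemma subspace_lincomb c x y : S x -> S y -> S (c *: x + y).
Proof. by case: HS => _; exact. Qed.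

Lemma subspaceD x y : S x -> S y -> S (x + y).
Proof. by case: HS => _ lin Sx Sy; have := lin 1 x y Sx Sy; rewrite scale1r. Qed.

Lemma subspaceZ c x : S x -> S (c *: x).
Proof. by case: HS => S0 lin Sx; have := lin c x 0 Sx S0; rewrite addr0. Qed.

Lemma subspaceB x y : S x -> S y -> S (x - y).
Proof. by move=> Sx Sy; rewrite -scaleN1r; exact: subspaceD (subspaceZ _ _). Qed.

Lemma subspaceMn x j : S x -> S (x *+ j).
Proof. by move=> Sx; rewrite -scaler_nat; exact: subspaceZ. Qed.

Lemma subspaceMz x j : S x -> S (x *~ j).
Proof. by move=> Sx; rewrite -scaler_int; exact: subspaceZ. Qed.

Lemma subspace_sum (I : Type) (r : seq I) (P : pred I) (f : I -> V) :
  (forall i, P i -> S (f i)) -> S (\sum_(i <- r | P i) f i).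
Proof. by move=> Sf; apply: big_ind => //; [exact: subspace0 | exact: subspaceD]. Qed.

End Subspace.

Lemma subspaceT (K : fieldType) (V : lmodType K) : subspace (fun _ : V => True).
Proof. by []. Qed.

Definition linear_on (K : fieldType) (V W : lmodType K) (S : V -> Prop) (f : V -> W) :=
  forall (c : K) x y, S x -> S y -> f (c *: x + y) = c *: f x + f y.

Section LinearOn.
Variables (K : fieldType) (V W : lmodType K) (S : V -> Prop) (f : V -> W).
Hypotheses (HS : subspace S) (Hf : linear_on S f).

Lemma linear_on0 : f 0 = 0.
Proof.
have S0 := subspace0 HS.
by have := Hf (-1) S0 S0; rewrite scaler0 addr0 scaleN1r addNr.
Qed.

Lemma linear_onD x y : S x -> S y -> f (x + y) = f x + f y.
Proof. by move=> Sx Sy; have := Hf 1 Sx Sy; rewrite !scale1r. Qed.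

Lemma linear_onZ c x : S x -> f (c *: x) = c *: f x.
Proof.
by move=> Sx; have := Hf c Sx (subspace0 HS); rewrite !addr0 linear_on0 addr0.
Qed.

Lemma linear_onB x y : S x -> S y -> f (x - y) = f x - f y.
Proof.
by move=> Sx Sy; rewrite -scaleN1r addrC Hf ?scaleN1r 1?addrC.
Qed.

Lemma linear_onMn x j : S x -> f (x *+ j) = f x *+ j.
Proof. by move=> Sx; rewrite -!scaler_nat linear_onZ. Qed.

Lemma linear_onMz x j : S x -> f (x *~ j) = f x *~ j.
Proof. by move=> Sx; rewrite -!scaler_int linear_onZ. Qed.

Lemma linear_on_sum (I : Type) (r : seq I) (g : I -> V) :
  (forall i, S (g i)) -> f (\sum_(i <- r) g i) = \sum_(i <- r) f (g i).
Proof.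
move=> Sg; elim: r => [|i r IH]; first by rewrite !big_nil linear_on0.
by rewrite !big_cons linear_onD ?IH //; exact: subspace_sum.
Qed.

End LinearOn.

Section WeakAssociativity.
Variables (M : zmodType) (md : M -> int -> M -> M).

Definition vanish_from (v w : M) (b : int) (T : nat) :=
  forall t : nat, (T <= t)%N -> md v (t%:Z - 1 - b) w = 0.

Definition wa_lhs (u v w : M) (l : nat) (a b : int) (T : nat) :=
  \sum_(0 <= t < T)
      (md u (l%:Z - 1 - a - t%:Z) (md v (t%:Z - 1 - b) w) *~ binz (a + t%:Z) t).

Definition wa_rhs (u v w : M) (l : nat) (a b : int) :=
  \sum_(0 <= i < l.+1)
      (md (md u (l%:Z - i%:Z - 1 - a) v) (i%:Z - 1 - b) w *+ 'C(l, i)).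

Definition weak_assoc_at (u v w : M) (l : nat) :=
  forall a b T, vanish_from v w b T -> wa_lhs u v w l a b T = wa_rhs u v w l a b.

Definition weak_assoc_for (u v w : M) := exists l, weak_assoc_at u v w l.

Hypothesis md0r : forall u n, md u n 0 = 0.

Lemma vanish_from_le v w b T T' :
  vanish_from v w b T -> (T <= T')%N -> vanish_from v w b T'.
Proof. by move=> H TT' t Ht; apply: H; exact: leq_trans Ht. Qed.

Lemma wa_lhs_extend u v w l a b T T' : vanish_from v w b T -> (T <= T')%N ->
  wa_lhs u v w l a b T' = wa_lhs u v w l a b T.
Proof.
move=> vT TT'; rewrite /wa_lhs (big_cat_nat (n := T)) //=.
rewrite [X in _ + X]big_nat_cond [X in _ + X]big1 ?addr0 // => t /andP[/andP[Ht _] _].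
by rewrite vT // md0r mul0rz.
Qed.

(* Multiplying by x0 + x2: the coefficient of x0^a x2^b at level l + 1 is the
   sum of the coefficients of x0^(a-1) x2^b and x0^a x2^(b-1) at level l. *)
Lemma weak_assoc_atS u v w l : weak_assoc_at u v w l -> weak_assoc_at u v w l.+1.
Proof.
move=> H a b T vT.
have vT1 : vanish_from v w b T.+1 by exact: vanish_from_le vT (leqnSn T).
have vT2 : vanish_from v w (b - 1) T.
  move=> t Ht; rewrite (_ : t%:Z - 1 - (b - 1) = t.+1%:Z - 1 - b); last by lia.
  by apply: vT; exact: leqW.
rewrite -(wa_lhs_extend u l.+1 a vT (leqnSn T)).
transitivity (wa_lhs u v w l (a - 1) b T.+1 + wa_lhs u v w l a (b - 1) T).
  rewrite /wa_lhs big_nat_recl // [in RHS]big_nat_recl // -(addrA (_ *~ _)).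
  congr (_ + _); first by rewrite !binz0; congr (md u _ _ *~ _); lia.
  rewrite -big_split /=; apply: eq_bigr => i _.
  rewrite binzS mulrzDr; congr (_ + _).
    by congr (md u _ _ *~ binz _ _); lia.
  by congr (md u _ (md v _ w) *~ binz _ _); lia.
rewrite (H _ _ _ vT1) (H _ _ _ vT2) /wa_rhs.
rewrite (big_nat_recl l.+1) // [in LHS](big_nat_recl l) //.
under [X in _ = _ + X]eq_bigr => i _ do rewrite binS mulrnDr.
rewrite big_split /= [X in _ = _ + (X + _)](big_nat_recr l) //=.
rewrite (bin_small (ltnSn l)) mulr0n addr0 -(addrA (_ *+ _)).
congr (_ + (_ + _)).
- by rewrite !bin0; congr (md (md u _ v) _ w *+ _); lia.
- by rewrite addr0; apply: eq_bigr => i _; congr (md (md u _ v) _ w *+ _); lia.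
- by apply: eq_bigr => i _; congr (md (md u _ v) _ w *+ _); lia.
Qed.

Lemma weak_assoc_at_le u v w l l' :
  weak_assoc_at u v w l -> (l <= l')%N -> weak_assoc_at u v w l'.
Proof.
move=> H; elim: l' => [|l' IH]; first by rewrite leqn0 => /eqP <-.
by rewrite leq_eqVlt => /orP[/eqP <- //|]; rewrite ltnS => /IH /weak_assoc_atS.
Qed.

Lemma weak_assoc_for_max u v w u' v' w' :
  weak_assoc_for u v w -> weak_assoc_for u' v' w' ->
  exists l, weak_assoc_at u v w l /\ weak_assoc_at u' v' w' l.
Proof.
move=> [l1 H1] [l2 H2]; exists (maxn l1 l2).
by split; [exact: weak_assoc_at_le H1 (leq_maxl _ _) | exact: weak_assoc_at_le H2 (leq_maxr _ _)].
Qed.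

Hypothesis md_addl : forall u u' n v, md (u + u') n v = md u n v + md u' n v.
Hypothesis md_addr : forall u n v v', md u n (v + v') = md u n v + md u n v'.
Hypothesis md_trunc : forall u v, exists N : int, forall n, N <= n -> md u n v = 0.

Lemma vanish_from_exists v w b : exists T, vanish_from v w b T.
Proof.
have [N HN] := md_trunc v w.
by exists (absz (N + 1 + b)) => t Ht; apply: HN; move: Ht; lia.
Qed.

Lemma weak_assoc_at_eventually u v w l :
  (forall a b, exists T0, forall T, (T0 <= T)%N -> vanish_from v w b T ->
      wa_lhs u v w l a b T = wa_rhs u v w l a b) -> weak_assoc_at u v w l.
Proof.
move=> H a b T vT; have [T0 HT0] := H a b.
rewrite -(wa_lhs_extend u l a vT (leq_maxl T T0)); apply: HT0; first exact: leq_maxr.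
exact: vanish_from_le vT (leq_maxl _ _).
Qed.

Lemma weak_assoc_for_addl u1 u2 v w :
  weak_assoc_for u1 v w -> weak_assoc_for u2 v w -> weak_assoc_for (u1 + u2) v w.
Proof.
move=> /weak_assoc_for_max/[apply] -[l [H1 H2]]; exists l => a b T vT.
have -> : wa_lhs (u1 + u2) v w l a b T = wa_lhs u1 v w l a b T + wa_lhs u2 v w l a b T.
  by rewrite /wa_lhs -big_split; apply: eq_bigr => t _; rewrite md_addl mulrzDl.
rewrite H1 // H2 // /wa_rhs -big_split; apply: eq_bigr => i _.
by rewrite !md_addl mulrnDl.
Qed.

Lemma weak_assoc_for_addm u v1 v2 w :
  weak_assoc_for u v1 w -> weak_assoc_for u v2 w -> weak_assoc_for u (v1 + v2) w.
Proof.
move=> /weak_assoc_for_max/[apply] -[l [H1 H2]]; exists l.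
apply: weak_assoc_at_eventually => a b.
have [T1 v1T] := vanish_from_exists v1 w b; have [T2 v2T] := vanish_from_exists v2 w b.
exists (maxn T1 T2) => T HT _.
have -> : wa_lhs u (v1 + v2) w l a b T = wa_lhs u v1 w l a b T + wa_lhs u v2 w l a b T.
  by rewrite /wa_lhs -big_split; apply: eq_bigr => t _; rewrite md_addl md_addr mulrzDl.
rewrite H1; last by apply: vanish_from_le v1T _; exact: leq_trans (leq_maxl _ _) HT.
rewrite H2; last by apply: vanish_from_le v2T _; exact: leq_trans (leq_maxr _ _) HT.
rewrite /wa_rhs -big_split; apply: eq_bigr => i _.
by rewrite md_addr md_addl mulrnDl.
Qed.

Lemma weak_assoc_for_addr u v w1 w2 :
  weak_assoc_for u v w1 -> weak_assoc_for u v w2 -> weak_assoc_for u v (w1 + w2).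
Proof.
move=> /weak_assoc_for_max/[apply] -[l [H1 H2]]; exists l.
apply: weak_assoc_at_eventually => a b.
have [T1 w1T] := vanish_from_exists v w1 b; have [T2 w2T] := vanish_from_exists v w2 b.
exists (maxn T1 T2) => T HT _.
have -> : wa_lhs u v (w1 + w2) l a b T = wa_lhs u v w1 l a b T + wa_lhs u v w2 l a b T.
  by rewrite /wa_lhs -big_split; apply: eq_bigr => t _; rewrite !md_addr mulrzDl.
rewrite H1; last by apply: vanish_from_le w1T _; exact: leq_trans (leq_maxl _ _) HT.
rewrite H2; last by apply: vanish_from_le w2T _; exact: leq_trans (leq_maxr _ _) HT.
rewrite /wa_rhs -big_split; apply: eq_bigr => i _.
by rewrite md_addr mulrnDl.
Qed.

End WeakAssociativity.

Section DirectSum.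
Variables (K : fieldType) (U : lmodType K) (G : int -> U -> Prop).
Hypothesis HG : direct_sum_decomp G.

Lemma G_subspace n : subspace (G n). Proof. by case: HG. Qed.

Lemma decomp_uniq u : exists d : seq int * (int -> U),
  [/\ uniq d.1, forall n, G n (d.2 n) & u = \sum_(n <- d.1) d.2 n].
Proof.
case: HG => _ /(_ u) [s [f [Gf ->]]] _.
exists (undup s, fun n => \sum_(m <- s) (if m == n then f m else 0)); split => /=.
- exact: undup_uniq.
- move=> n; apply: (subspace_sum (G_subspace n)) => m _.
  by case: eqP => [<-|_]; [exact: Gf | exact: subspace0 (G_subspace n)].
- rewrite exchange_big /=; apply: eq_big_seq => m ms.
  rewrite (@sumr_supp1 _ _ _ m) ?undup_uniq ?mem_undup ?eqxx //.
  by move=> n; rewrite eq_sym => /negbTE ->.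
Qed.

Definition decomp u := proj1_sig (constructive_indefinite_description _ (decomp_uniq u)).

Lemma decompP u :
  [/\ uniq (decomp u).1, forall n, G n ((decomp u).2 n) & u = \sum_(n <- (decomp u).1) (decomp u).2 n].
Proof. exact: proj2_sig (constructive_indefinite_description _ (decomp_uniq u)). Qed.

Definition supp u := (decomp u).1.

Definition comp n u := if n \in supp u then (decomp u).2 n else 0.

Lemma supp_uniq u : uniq (supp u).
Proof. by case: (decompP u). Qed.

Lemma comp_graded n u : G n (comp n u).
Proof.
rewrite /comp; case: ifP => _; last exact: subspace0 (G_subspace n).
by case: (decompP u).
Qed.

Lemma comp_notin_supp n u : n \notin supp u -> comp n u = 0.
Proof. by rewrite /comp => /negbTE ->. Qed.

Lemma comp_sum u : u = \sum_(n <- supp u) comp n u.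
Proof.
case: (decompP u) => _ _ {1}->; apply: eq_big_seq => n ns.
by rewrite /comp ns.
Qed.

Lemma comp_sum_sub u (t : seq int) : uniq t -> {subset supp u <= t} ->
  u = \sum_(n <- t) comp n u.
Proof.
move=> ut st; rewrite (@sumr_supp_sub _ _ (supp u)) ?supp_uniq //; first exact: comp_sum.
by move=> n; exact: comp_notin_supp.
Qed.

Lemma compE_sum u (s : seq int) (g : int -> U) : uniq s -> (forall n, G n (g n)) ->
  u = \sum_(n <- s) g n -> forall n, comp n u = if n \in s then g n else 0.
Proof.
move=> us Gg ->{u} n.
set u := \sum_(n <- s) g n; set t := undup (s ++ supp u).
set h := fun n => (if n \in s then g n else 0) - comp n u.
have ut : uniq t by exact: undup_uniq.
have Gh m : G m (h m).
  apply: (subspaceB (G_subspace m)) (comp_graded m u).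
  by case: ifP => _; [exact: Gg | exact: subspace0 (G_subspace m)].
have sum_h : \sum_(m <- t) h m = 0.
  rewrite /h big_split /= sumrN (@sumr_supp_sub _ _ s) //; last 2 first.
  - by move=> m ms; rewrite mem_undup mem_cat ms.
  - by move=> m /negbTE ->.
  rewrite -(comp_sum_sub ut); last by move=> m ms; rewrite mem_undup mem_cat ms orbT.
  by rewrite (eq_big_seq g) ?subrr // => m ->.
case: HG => _ _ /(_ t h ut Gh sum_h n) uniqG.
case nt : (n \in t); first by move/eqP: (uniqG nt); rewrite subr_eq0 => /eqP.
move/negbT: nt; rewrite mem_undup mem_cat negb_or => /andP[/negbTE -> /comp_notin_supp].
by [].
Qed.

Lemma comp_homogeneous m y : G m y -> forall n, comp n y = if n == m then y else 0.
Proof.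
move=> Gy n; set g := fun n => if n == m then y else 0.
have Gg k : G k (g k).
  by rewrite /g; case: eqP => [->|_]; [exact: Gy | exact: subspace0 (G_subspace k)].
have -> := @compE_sum y [:: m] g erefl Gg; first by rewrite inE /g; case: eqP.
by rewrite big_seq1 /g eqxx.
Qed.

Lemma comp_linearP n c u u' : comp n (c *: u + u') = c *: comp n u + comp n u'.
Proof.
set s := undup (supp u ++ supp u'); set g := fun m => c *: comp m u + comp m u'.
have us : uniq s by exact: undup_uniq.
have Gg m : G m (g m).
  apply: (subspaceD (G_subspace m)) (comp_graded m u').
  exact: (subspaceZ (G_subspace m)) (comp_graded m u).
have sum_g : c *: u + u' = \sum_(m <- s) g m.
  rewrite big_split /= -scaler_sumr -!comp_sum_sub //.
  - by move=> m ms; rewrite mem_undup mem_cat ms orbT.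
  - by move=> m ms; rewrite mem_undup mem_cat ms.
rewrite (compE_sum us Gg sum_g n) /g; case: ifP => // /negbT.
rewrite mem_undup mem_cat negb_or => /andP[/comp_notin_supp -> /comp_notin_supp ->].
by rewrite scaler0 addr0.
Qed.

Lemma homogeneous_ind (P : U -> Prop) :
  (forall x y, P x -> P y -> P (x + y)) -> (forall n y, G n y -> P y) -> forall u, P u.
Proof.
move=> PD Ph u; rewrite (comp_sum u); apply: big_ind => //.
- exact: Ph (subspace0 (G_subspace 0)).
- by move=> n _; exact: Ph (comp_graded n u).
Qed.

End DirectSum.

Section GradedAlgebra.
Variables (K : fieldType) (V : lmodType K) (vac : V) (md : V -> int -> V -> V)
  (F : int -> V -> Prop).
Hypotheses (HV : is_nva vac md) (HF : nva_filtration vac md F).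
Variables (U : lmodType K) (G : int -> U -> Prop) (pi : int -> V -> U).
Hypothesis HU : is_Gr_realization F G pi.

Lemma md_linearl n v : linear_on (fun _ => True) (fun u => md u n v).
Proof. by move=> c u u' _ _; exact: (nva_linl HV). Qed.

Lemma md_linearr u n : linear_on (fun _ => True) (md u n).
Proof. by move=> c v v' _ _; exact: (nva_linr HV). Qed.

Lemma md_subl u u' n v : md (u - u') n v = md u n v - md u' n v.
Proof. by apply: (linear_onB (md_linearl n v)). Qed.

Lemma md_subr u n v v' : md u n (v - v') = md u n v - md u n v'.
Proof. by apply: (linear_onB (md_linearr u n)). Qed.

Lemma F_subspace n : subspace (F n). Proof. by case: HF. Qed.

Lemma F_vac : F 0 vac. Proof. by case: HF. Qed.

Lemma F_mono m n x : m <= n -> F m x -> F n x.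
Proof.
move=> mn; rewrite (_ : n = m + (absz (n - m))%:Z); last by lia.
elim: (absz _) => [|k IH] Fx; first by rewrite addr0.
by rewrite (_ : m + k.+1%:Z = (m + k%:Z) + 1); [case: HF => _ FS _ _; exact: FS (IH Fx) | lia].
Qed.

Lemma F_md d k n m a b : d = k + n - m - 1 -> F k a -> F n b -> F d (md a m b).
Proof. by move=> -> Fa Fb; case: HF => _ _ _; apply. Qed.

Lemma pi_linear n : linear_on (F n) (pi n). Proof. by case: HU => _ H _ _ _; exact: H. Qed.

Lemma pi_graded n x : F n x -> G n (pi n x). Proof. by case: HU => _ _ H _ _; exact: H. Qed.

Lemma pi_surj n y : G n y -> exists2 x, F n x & pi n x = y.
Proof. by case: HU => _ _ _ H _; exact: H. Qed.

Lemma pi_eq0 n x : F n x -> pi n x = 0 <-> F (n - 1) x.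
Proof. by case: HU => _ _ _ _; exact. Qed.

Lemma pi_eq n x y : F n x -> F n y -> F (n - 1) (x - y) -> pi n x = pi n y.
Proof.
move=> Fx Fy Fxy; apply/eqP; rewrite -subr_eq0 -(linear_onB (@pi_linear n)) //.
by apply/eqP; apply/(pi_eq0 (subspaceB (F_subspace n) Fx Fy)).
Qed.

Definition lift n (y : U) : V := epsilon (inhabits 0) (fun x => F n x /\ pi n x = y).

Lemma liftP n y : G n y -> F n (lift n y) /\ pi n (lift n y) = y.
Proof.
move=> Gy; apply: (epsilon_spec (inhabits 0) (fun x => F n x /\ pi n x = y)).
by have [x Fx <-] := pi_surj Gy; exists x.
Qed.

Definition gr_md_hom m n k (y z : U) := pi (m + n - k - 1) (md (lift m y) k (lift n z)).

Lemma gr_md_homE m n k a b : F m a -> F n b ->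
  gr_md_hom m n k (pi m a) (pi n b) = pi (m + n - k - 1) (md a k b).
Proof.
move=> Fa Fb; rewrite /gr_md_hom.
have [Fa' pa] := liftP (pi_graded Fa); have [Fb' pb] := liftP (pi_graded Fb).
set a' := lift m _ in Fa' pa *; set b' := lift n _ in Fb' pb *.
have Fda : F (m - 1) (a' - a).
  apply/(pi_eq0 (subspaceB (F_subspace m) Fa' Fa)).
  by rewrite (linear_onB (@pi_linear m)) // pa subrr.
have Fdb : F (n - 1) (b' - b).
  apply/(pi_eq0 (subspaceB (F_subspace n) Fb' Fb)).
  by rewrite (linear_onB (@pi_linear n)) // pb subrr.
apply: pi_eq; [exact: F_md Fa' Fb' | exact: F_md Fa Fb |].
have -> : md a' k b' - md a k b = md (a' - a) k b' + md a k (b' - b).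
  by rewrite md_subl md_subr addrA subrK.
by apply: (subspaceD (F_subspace _)); [apply: F_md Fda Fb' | apply: F_md Fa Fdb]; lia.
Qed.

Lemma gr_decomp : direct_sum_decomp G. Proof. by case: HU. Qed.

Local Notation supp := (supp gr_decomp).
Local Notation comp := (comp gr_decomp).

Lemma gr_md_hom_linearl m n k z : G n z -> linear_on (G m) (fun y => gr_md_hom m n k y z).
Proof.
move=> Gz c y y' Gy Gy'.
have [a Fa <-] := pi_surj Gy; have [a' Fa' <-] := pi_surj Gy'; have [b Fb <-] := pi_surj Gz.
have Fc := subspace_lincomb (F_subspace m) c Fa Fa'.
rewrite -(@pi_linear m) // !gr_md_homE //.
by rewrite (nva_linl HV) (@pi_linear _) //; exact: F_md.
Qed.

Lemma gr_md_hom_linearr m n k y : G m y -> linear_on (G n) (gr_md_hom m n k y).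
Proof.
move=> Gy c z z' Gz Gz'.
have [a Fa <-] := pi_surj Gy; have [b Fb <-] := pi_surj Gz; have [b' Fb' <-] := pi_surj Gz'.
have Fc := subspace_lincomb (F_subspace n) c Fb Fb'.
rewrite -(@pi_linear n) // !gr_md_homE //.
by rewrite (nva_linr HV) (@pi_linear _) //; exact: F_md.
Qed.

Lemma gr_md_hom0l m n k z : G n z -> gr_md_hom m n k 0 z = 0.
Proof.
by move=> Gz; exact: linear_on0 (G_subspace gr_decomp m) (@gr_md_hom_linearl m n k z Gz).
Qed.

Lemma gr_md_hom0r m n k y : G m y -> gr_md_hom m n k y 0 = 0.
Proof.
by move=> Gy; exact: linear_on0 (G_subspace gr_decomp n) (@gr_md_hom_linearr m n k y Gy).
Qed.

Definition gr_md (u : U) (k : int) (v : U) : U :=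
  \sum_(m <- supp u) \sum_(n <- supp v) gr_md_hom m n k (comp m u) (comp n v).

Lemma gr_md_supp_sub u v k (s t : seq int) : uniq s -> uniq t ->
  {subset supp u <= s} -> {subset supp v <= t} ->
  gr_md u k v = \sum_(m <- s) \sum_(n <- t) gr_md_hom m n k (comp m u) (comp n v).
Proof.
move=> us ut su tv; rewrite /gr_md (@sumr_supp_sub _ _ (supp u) s) ?supp_uniq //; last first.
  move=> m /comp_notin_supp ->; apply: big1 => n _.
  exact: gr_md_hom0l (comp_graded gr_decomp _ _).
apply: eq_bigr => m _; rewrite (@sumr_supp_sub _ _ (supp v) t) ?supp_uniq //.
move=> n /comp_notin_supp ->.
exact: gr_md_hom0r (comp_graded gr_decomp _ _).
Qed.

Lemma gr_mdE m n k d a b : F m a -> F n b -> d = m + n - k - 1 ->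
  gr_md (pi m a) k (pi n b) = pi d (md a k b).
Proof.
move=> Fa Fb ->; have Ga := pi_graded Fa; have Gb := pi_graded Fb.
set s := undup (m :: supp (pi m a)); set t := undup (n :: supp (pi n b)).
have sub_s : {subset supp (pi m a) <= s} by move=> x xs; rewrite mem_undup inE xs orbT.
have sub_t : {subset supp (pi n b) <= t} by move=> x xt; rewrite mem_undup inE xt orbT.
rewrite (@gr_md_supp_sub _ _ _ s t) ?undup_uniq //.
rewrite (@sumr_supp1 _ _ _ m) ?undup_uniq ?mem_undup ?inE ?eqxx //; last first.
  move=> x /negbTE xm; apply: big1 => y _; rewrite (comp_homogeneous _ Ga) xm.
  exact: gr_md_hom0l (comp_graded gr_decomp _ _).
rewrite (@sumr_supp1 _ _ _ n) ?undup_uniq ?mem_undup ?inE ?eqxx //; last first.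
  move=> y /negbTE yn; rewrite (comp_homogeneous _ Gb) yn.
  exact: gr_md_hom0r (comp_graded gr_decomp _ _).
by rewrite (comp_homogeneous _ Ga) (comp_homogeneous _ Gb) !eqxx gr_md_homE.
Qed.

Lemma gr_md_linearl n v : linear_on (fun _ => True) (fun u => gr_md u n v).
Proof.
move=> c u u' _ _.
set s := undup (supp u ++ supp u' ++ supp (c *: u + u')).
have us : uniq s by exact: undup_uniq.
rewrite !(@gr_md_supp_sub _ _ _ s (supp v)) ?supp_uniq //;
  try by move=> x xs; rewrite mem_undup !mem_cat xs ?orbT.
rewrite scaler_sumr -big_split /=; apply: eq_bigr => m _.
rewrite scaler_sumr -big_split /=; apply: eq_bigr => k _.
by rewrite comp_linearP gr_md_hom_linearl //; exact: comp_graded.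
Qed.

Lemma gr_md_linearr u n : linear_on (fun _ => True) (gr_md u n).
Proof.
move=> c v v' _ _.
set t := undup (supp v ++ supp v' ++ supp (c *: v + v')).
have ut : uniq t by exact: undup_uniq.
rewrite !(@gr_md_supp_sub _ _ _ (supp u) t) ?supp_uniq //;
  try by move=> x xs; rewrite mem_undup !mem_cat xs ?orbT.
rewrite scaler_sumr -big_split /=; apply: eq_bigr => m _.
rewrite scaler_sumr -big_split /=; apply: eq_bigr => k _.
by rewrite comp_linearP gr_md_hom_linearr //; exact: comp_graded.
Qed.

Lemma gr_md_addl u u' n v : gr_md (u + u') n v = gr_md u n v + gr_md u' n v.
Proof. by apply: (linear_onD (gr_md_linearl n v)). Qed.

Lemma gr_md_addr u n v v' : gr_md u n (v + v') = gr_md u n v + gr_md u n v'.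
Proof. by apply: (linear_onD (gr_md_linearr u n)). Qed.

Lemma gr_md0r u n : gr_md u n 0 = 0.
Proof. exact: linear_on0 (@subspaceT _ U) (gr_md_linearr u n). Qed.

Lemma gr_ind (P : U -> Prop) : (forall x y, P x -> P y -> P (x + y)) ->
  (forall m a, F m a -> P (pi m a)) -> forall u, P u.
Proof.
move=> PD Ppi; apply: (homogeneous_ind gr_decomp) => // n y /pi_surj[a Fa <-].
exact: Ppi.
Qed.

Lemma gr_md_trunc u v : exists N : int, forall n, N <= n -> gr_md u n v = 0.
Proof.
elim/gr_ind: u v => [x y IHx IHy v|m a Fa].
  have [N1 H1] := IHx v; have [N2 H2] := IHy v.
  by exists (Num.max N1 N2) => n; rewrite ge_max => /andP[n1 n2]; rewrite gr_md_addl H1 ?H2 ?addr0.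
elim/gr_ind => [x y [N1 H1] [N2 H2]|n b Fb].
  by exists (Num.max N1 N2) => k; rewrite ge_max => /andP[k1 k2]; rewrite gr_md_addr H1 ?H2 ?addr0.
have [N HN] := nva_trunc HV a b.
exists N => k Nk; rewrite (gr_mdE (d := m + n - k - 1)) // HN //.
exact: linear_on0 (F_subspace _) (@pi_linear _).
Qed.

Lemma gr_md_vac v n : gr_md (pi 0 vac) n v = if n == -1 then v else 0.
Proof.
elim/gr_ind: v => [x y Hx Hy|m b Fb].
  by rewrite gr_md_addr Hx Hy; case: ifP; rewrite ?addr0.
rewrite (gr_mdE (d := m - n - 1) F_vac Fb); last by lia.
rewrite (nva_vac HV); case: eqP => [->|_]; first by congr (pi _ b); lia.
exact: linear_on0 (F_subspace _) (@pi_linear _).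
Qed.

Lemma gr_md_create u :
  (forall n : int, 0 <= n -> gr_md u n (pi 0 vac) = 0) /\ gr_md u (-1) (pi 0 vac) = u.
Proof.
elim/gr_ind: u => [x y [H1 E1] [H2 E2]|m a Fa].
  by split=> [n n0|]; rewrite gr_md_addl ?(H1 n, H2 n, addr0) ?E1 ?E2.
have [H E] := nva_create HV a; split=> [n n0|].
  rewrite (gr_mdE (d := m - n - 1) Fa F_vac) ?H //; last by lia.
  exact: linear_on0 (F_subspace _) (@pi_linear _).
by rewrite (gr_mdE (d := m) Fa F_vac) ?E //; lia.
Qed.

Lemma gr_md_graded m n k u v : G m u -> G n v -> G (m + n - k - 1) (gr_md u k v).
Proof.
move=> /pi_surj[a Fa <-] /pi_surj[b Fb <-].
by rewrite (gr_mdE (d := m + n - k - 1)) //; exact/pi_graded/(F_md _ Fa Fb).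
Qed.

(* Every term of either side lies in F_D, D = m + n + p + a + b - l, and the
   classes in F_D/F_(D-1) of the terms are the corresponding terms in Gr. *)
Lemma weak_assoc_at_gr m n p a b c l : F m a -> F n b -> F p c ->
  weak_assoc_at md a b c l -> weak_assoc_at gr_md (pi m a) (pi n b) (pi p c) l.
Proof.
move=> Fa Fb Fc Habc; apply: (weak_assoc_at_eventually gr_md0r) => i j.
have [T0 vT0] := vanish_from_exists (nva_trunc HV) b c j.
exists T0 => T T0T _; have vT := vanish_from_le vT0 T0T.
set D := m + n + p + i + j - l%:Z.
have FL t : F D (md a (l%:Z - 1 - i - t%:Z) (md b (t%:Z - 1 - j) c)).
  apply: (F_md (n := n + p - (t%:Z - 1 - j) - 1)) Fa _; first by rewrite /D; lia.
  exact: F_md Fb Fc.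
have FR t : F D (md (md a (l%:Z - t%:Z - 1 - i) b) (t%:Z - 1 - j) c).
  apply: (F_md (k := m + n - (l%:Z - t%:Z - 1 - i) - 1)) _ Fc; first by rewrite /D; lia.
  exact: F_md Fa Fb.
have FD := F_subspace D.
transitivity (pi D (wa_lhs md a b c l i j T)).
  rewrite /wa_lhs (linear_on_sum FD (@pi_linear D)); last first.
    by move=> t; exact: (subspaceMz FD _ (FL t)).
  apply: eq_bigr => t _; rewrite (linear_onMz FD (@pi_linear D)) //; congr (_ *~ _).
  rewrite (gr_mdE (d := n + p - (t%:Z - 1 - j) - 1)) //.
  by rewrite (gr_mdE (d := D)) //; [exact: F_md Fb Fc | rewrite /D; lia].
rewrite Habc // /wa_rhs (linear_on_sum FD (@pi_linear D)); last first.
  by move=> t; exact: (subspaceMn FD _ (FR t)).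
apply: eq_bigr => t _; rewrite (linear_onMn FD (@pi_linear D)) //; congr (_ *+ _).
rewrite (gr_mdE (d := m + n - (l%:Z - t%:Z - 1 - i) - 1)) //.
by rewrite (gr_mdE (d := D)) //; [exact: F_md Fa Fb | rewrite /D; lia].
Qed.

Lemma gr_weak_assoc : weak_assoc gr_md.
Proof.
suff wa u v w : weak_assoc_for gr_md u v w by exact: wa.
elim/gr_ind: u v w => [x y IHx IHy v w|m a Fa v].
  exact: (weak_assoc_for_addl gr_md0r gr_md_addl (IHx v w) (IHy v w)).
elim/gr_ind: v => [x y IHx IHy w|n b Fb w].
  exact: (weak_assoc_for_addm gr_md0r gr_md_addl gr_md_addr gr_md_trunc (IHx w) (IHy w)).
elim/gr_ind: w => [x y IHx IHy|p c Fc].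
  exact: (weak_assoc_for_addr gr_md0r gr_md_addr gr_md_trunc IHx IHy).
have [l Habc] := nva_assoc HV a b c.
by exists l; exact: weak_assoc_at_gr.
Qed.

Lemma gr_is_Zgraded_nva : is_Zgraded_nva G (pi 0 vac) gr_md.
Proof.
split; [constructor | exact: gr_decomp | exact: pi_graded F_vac | exact: gr_md_graded].
- by move=> c u u' n v; apply: (gr_md_linearl n v).
- by move=> c u n v v'; apply: (gr_md_linearr u n).
- exact: gr_md_trunc.
- exact: gr_md_vac.
- exact: gr_md_create.
- exact: gr_weak_assoc.
Qed.

Section Generators.
Variable T : V -> Prop.
Hypothesis HFT : forall n x, F n x <-> assoc_filtration vac md T n x.

Definition generator_seq (s : seq (V * int)) :=
  forall i : nat, (i < size s)%N -> T (nth (0, 0) s i).1.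

Lemma generator_seq_behead p s : generator_seq (p :: s) -> generator_seq s.
Proof. by move=> Ts i; exact: Ts i.+1. Qed.

Lemma F1_generator u : T u -> F 1 u.
Proof.
move=> Tu; apply/HFT => S _; apply; exists [:: (u, -1)]; split => //.
- by move=> i; rewrite ltnS leqn0 => /eqP ->.
- by rewrite big_seq1.
- by rewrite /monomial /= (proj2 (nva_create HV u)).
Qed.

Lemma F_monomial s : generator_seq s -> F (- \sum_(q <- s) q.2) (monomial vac md s).
Proof.
elim: s => [|[u k] s IH] Ts; first by rewrite big_nil oppr0; exact: F_vac.
rewrite big_cons; apply: F_md (F1_generator (Ts 0%N erefl)) (IH (generator_seq_behead Ts)).
by rewrite /=; lia.
Qed.

Variable S : U -> Prop.
Hypotheses (HS : subalgebra (pi 0 vac) gr_md S) (HTS : forall u, T u -> S (pi 1 u)).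

Lemma gr_monomial_in s : generator_seq s ->
  S (pi (- \sum_(q <- s) q.2) (monomial vac md s)).
Proof.
case: HS => _ Svac Smd; elim: s => [|[u k] s IH] Ts; first by rewrite big_nil oppr0.
have Tu : T u := Ts 0%N erefl; have Ts' := generator_seq_behead Ts.
rewrite big_cons -(gr_mdE (F1_generator Tu) (F_monomial Ts')); last by rewrite /=; lia.
by apply: Smd; [exact: HTS | exact: IH].
Qed.

Lemma gr_class_in n a : F n a -> S (pi n a).
Proof.
case: HS => Ssub _ _; have S0 := subspace0 Ssub.
move=> /HFT /(_ (fun x => F n x /\ S (pi n x))) span_a; apply: (proj2 (span_a _ _)).
- split; first split.
  + exact: subspace0 (F_subspace n).
  + by rewrite (linear_on0 (F_subspace n) (@pi_linear n)).
  move=> c x y [Fx Sx] [Fy Sy]; split; first exact: (subspace_lincomb (F_subspace n) c Fx Fy).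
  by rewrite (@pi_linear n c x y Fx Fy); exact: (subspace_lincomb Ssub c Sx Sy).
move=> x [s [Ts le_n _ ->]]; have Fs := F_monomial Ts.
split; first by apply: F_mono Fs; lia.
have [<-|ne] := eqVneq (- \sum_(q <- s) q.2) n; first exact: gr_monomial_in.
suff -> : pi n (monomial vac md s) = 0 by [].
by apply/pi_eq0; apply: F_mono Fs; lia.
Qed.

Lemma gr_subalgebra_full u : S u.
Proof.
case: HS => Ssub _ _; elim/gr_ind: u => [x y|m a Fa]; first exact: subspaceD.
exact: gr_class_in.
Qed.

End Generators.

End GradedAlgebra.

Theorem proposition2p10 (K : fieldType) (V : lmodType K) (vac : V)
    (md : V -> int -> V -> V) (F : int -> V -> Prop)
    (HV : is_nva vac md) (HF : nva_filtration vac md F)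
    (U : lmodType K) (G : int -> U -> Prop) (pi : int -> V -> U)
    (HU : is_Gr_realization F G pi) :
  exists (vacU : U) (mdU : U -> int -> U -> U),
    [/\ is_Zgraded_nva G vacU mdU,
        vacU = pi 0 vac,
        (forall (m n k : int) (a b : V), F m a -> F n b ->
            mdU (pi m a) k (pi n b) = pi (m + n - k - 1) (md a k b)) &
        (forall T : V -> Prop, generating vac md T ->
            (forall n x, F n x <-> assoc_filtration vac md T n x) ->
            (forall u, T u -> F 1 u) /\
            generating vacU mdU (fun y => exists2 u, T u & y = pi 1 u))].
Proof.
exists (pi 0 vac), (gr_md md HU); split=> //.
- exact: gr_is_Zgraded_nva.
- by move=> m n k a b Fa Fb; apply: (gr_mdE HV HF).
move=> T _ HFT; split=> [u|S HS HTS]; first exact: (F1_generator HV HFT).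
by apply: (gr_subalgebra_full HV HF HFT HS) => u Tu; apply: HTS; exists u.
Qed.
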